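(* Let $P,Q,R$ be plane posets. (1) $P\triangleleft Q\leq R$ if and only if there exists a biideal $I_0$ of $R$ such that $P\leq R\setminus I_0$ and $Q\leq I_0$. Moreover, if this holds, $I_0$ is unique and $I_0=\theta_{PQ,R}(Q)$. (2) $PQ\leq R$ if and only if there exists a plane subposet $I_0$ of $R$ such that $R=(R\setminus I_0)I_0$, $P\leq R\setminus I_0$ and $Q\leq I_0$. Moreover, if this holds, $I_0$ is unique and $I_0=\theta_{P\triangleleft Q,R}(Q)$. (3) $\iota(PQ)\leq R$ if and only if there exists a biideal $I_0$ of $R$ such that $\iota(R\setminus I_0)\leq P$ and $\iota(I_0)\leq Q$. Moreover, if this holds, $I_0$ is unique and $I_0=\theta_{PQ,R}(Q)$. (4) $\iota(P\triangleleft Q)\leq R$ if and only if there exists a plane subposet $I_0$ of $R$ such that $R=(R\setminus I_0)I_0$, $\iota(R\setminus I_0)\leq P$ and $\iota(I_0)\leq Q$. Moreover, if this holds, $I_0$ is unique and $I_0=\theta_{P\triangleleft Q,R}(Q)$.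
   Context: A plane poset is a finite set with two partial orders $\leq_h,\leq_r$ such that two distinct elements are $\leq_h$-comparable iff they are not $\leq_r$-comparable, considered up to isomorphism; a subset with the restricted orders is a plane subposet. On a plane poset, $x\leq y$ iff ($x\leq_h y$ or $x\leq_r y$) is a total order (known fact). For plane posets $P,Q$ of the same cardinality, $\theta_{P,Q}$ is the increasing bijection $P\to Q$ for these total orders, and $P\leq Q$ means: for all $x,y\in P$, $\theta_{P,Q}(x)\leq_h\theta_{P,Q}(y)$ in $Q$ implies $x\leq_h y$ in $P$ (the relation $\leq$ is only defined between plane posets of the same cardinality). A biideal of $P$ is a subset $I$ such that $x\in I$ and ($x\leq_h y$ or $x\leq_r y$) imply $y\in I$. $PQ$ is the plane poset on $P\sqcup Q$ in which $P,Q$ are plane subposets, no element of $P$ is $\leq_h$-comparable to an element of $Q$, and $x<_r y$ for all $x\in P,y\in Q$; $P\triangleleft Q$ is defined likewise with $x<_h y$ for all $x\in P,y\in Q$ and no $\leq_r$-comparabilities between $P$ and $Q$. For a plane subposet $I_0$ of $R$, $R=(R\setminus I_0)I_0$ means $R$ equals the product $PQ$-type construction of its plane subposets $R\setminus I_0$ and $I_0$. $\iota(P)=(P,\leq_r,\leq_h)$ exchanges the two orders. *)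

From mathcomp Require Import all_boot.
Set Implicit Arguments. Unset Strict Implicit. Unset Printing Implicit Defensive.

(* A (raw) bi-relational finite structure: carrier with two relations
   <=_h (ph) and <=_r (pr).  Plane-poset axioms are a separate predicate. *)
Record pp := PP { car :> finType; ph : rel car; pr : rel car }.
Arguments ph p _ _ : clear implicits.
Arguments pr p _ _ : clear implicits.

Definition is_porder (T : finType) (e : rel T) : Prop :=
  reflexive e /\ antisymmetric e /\ transitive e.

Definition is_plane (P : pp) : Prop :=
  is_porder (ph P) /\ is_porder (pr P) /\
  forall x y : P, x != y ->
    (ph P x y || ph P y x) = ~~ (pr P x y || pr P y x).

Definition pple (P : pp) (x y : P) : bool := ph P x y || pr P x y.

Definition rank (P : pp) (x : P) : nat :=
  #|[pred y : P | pple y x && (y != x)]|.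

(* theta_{P,Q}: the increasing bijection P -> Q (rank-preserving map);
   option-valued since it is only meaningful when #|P| = #|Q|. *)
Definition theta (P Q : pp) (x : P) : option Q :=
  [pick y : Q | rank y == rank x].

Definition ppleq (P Q : pp) : Prop :=
  #|P| = #|Q| /\
  forall (x y : P) (x' y' : Q), theta Q x = Some x' -> theta Q y = Some y' ->
    ph Q x' y' -> ph P x y.

Definition biideal (R : pp) (I : {set R}) : Prop :=
  forall x y : R, x \in I -> (ph R x y || pr R x y) -> y \in I.

Definition sub (R : pp) (A : {set R}) : pp :=
  @PP {x : R | x \in A} (fun x y => ph R (val x) (val y))
                        (fun x y => pr R (val x) (val y)).

Definition pprod (P Q : pp) : pp :=
  @PP (P + Q)%type
    (fun a b => match a, b with
                | inl x, inl y => ph P x y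
                | inr x, inr y => ph Q x y
                | _, _ => false end)
    (fun a b => match a, b with
                | inl x, inl y => pr P x y
                | inr x, inr y => pr Q x y
                | inl _, inr _ => true
                | inr _, inl _ => false end).

Definition ptri (P Q : pp) : pp :=
  @PP (P + Q)%type
    (fun a b => match a, b with
                | inl x, inl y => ph P x y
                | inr x, inr y => ph Q x y
                | inl _, inr _ => true
                | inr _, inl _ => false end)
    (fun a b => match a, b with
                | inl x, inl y => pr P x y
                | inr x, inr y => pr Q x y
                | _, _ => false end).

Definition iota_pp (P : pp) : pp := @PP P (pr P) (ph P).

(* R = (R \ I) I : R is literally the product structure of its plane
   subposets R\I and I (relations inside each part are those of R already) *)
Definition is_prod_split (R : pp) (I : {set R}) : Prop :=
  forall x y : R, x \notin I -> y \in I ->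
    [&& pr R x y, x != y, ~~ pr R y x, ~~ ph R x y & ~~ ph R y x].

Definition theta_img_prod (P Q R : pp) : {set R} :=
  [set y : R | [exists q : Q, @theta (pprod P Q) R (inr q) == Some y]].
Definition theta_img_tri (P Q R : pp) : {set R} :=
  [set y : R | [exists q : Q, @theta (ptri P Q) R (inr q) == Some y]].

From mathcomp Require Import all_boot.
Set Implicit Arguments. Unset Strict Implicit. Unset Printing Implicit Defensive.

(* On a plane poset the relation [pple] is a total order, so [rank] is an
   order isomorphism onto [0, #|P|) and [P <= Q] only compares <=_h along
   equal ranks.  If [R] is cut into a lower part [R \ I] and an upper part
   [I], ranks in [R \ I] are ranks in [R] and ranks in [I] are shifted by
   [#|R \ I|]; in [P <| Q] and [PQ] the same holds with [P] below [Q].  Hence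
   [P <| Q <= R] and [PQ <= R] amount to [P <= R \ I] and [Q <= I] for the
   cut [I] of the ranks [>= #|P|], plus a condition on the <=_h-relations
   across the cut: none from [I] to [R \ I] (a biideal) resp. none at all (a
   product splitting).  Parts (3) and (4) follow because [iota (PQ)] is
   [iota P <| iota Q] and [iota A <= B] is equivalent to [iota B <= A]. *)

Section PlanePoset.
Variable P : pp.
Hypothesis HP : is_plane P.

Lemma ph_pr_comparable_eq (x y : P) :
  ph P x y || ph P y x -> pr P x y || pr P y x -> x = y.
Proof.
case: HP => _ [_ plane] hh hr; case: (eqVneq x y) => // /plane.
by rewrite hh hr.
Qed.

Lemma pple_refl (x : P) : pple x x.
Proof. by case: HP => [[hrefl _] _]; rewrite /pple hrefl. Qed.

Lemma pple_total (x y : P) : pple x y || pple y x.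
Proof.
case: (eqVneq x y) => [->|nxy]; first by rewrite pple_refl.
case: HP => _ [_ /(_ x y nxy)]; rewrite /pple.
by case: (ph P x y); case: (ph P y x); case: (pr P x y); case: (pr P y x).
Qed.

Lemma pple_anti (x y : P) : pple x y -> pple y x -> x = y.
Proof.
case: HP => [[_ [h_anti _]] [[_ [r_anti _]] _]].
rewrite /pple => /orP[h1|h1] /orP[h2|h2].
- by apply: h_anti; rewrite h1 h2.
- by apply: ph_pr_comparable_eq; rewrite ?h1 ?h2 ?orbT.
- by apply: ph_pr_comparable_eq; rewrite ?h1 ?h2 ?orbT.
- by apply: r_anti; rewrite h1 h2.
Qed.

(* Mixed case: if [x <=_h y <=_r z] then [x, z] are comparable for one of the
   orders, and transitivity of that order makes one of the two steps an
   equality. *)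
Lemma pple_trans (x y z : P) : pple x y -> pple y z -> pple x z.
Proof.
case: HP => [[_ [_ h_tr]] [[_ [_ r_tr]] _]].
rewrite {1 2}/pple => /orP[h1|h1] /orP[h2|h2].
- by rewrite /pple (h_tr _ _ _ h1 h2).
- case/orP: (pple_total x z) => // /orP[h3|h3].
  + have <- : y = z by apply: ph_pr_comparable_eq; rewrite ?(h_tr _ _ _ h3 h1) ?h2 ?orbT.
    by rewrite /pple h1.
  + have -> : x = y by apply: ph_pr_comparable_eq; rewrite ?(r_tr _ _ _ h2 h3) ?h1 ?orbT.
    by rewrite /pple h2 orbT.
- case/orP: (pple_total x z) => // /orP[h3|h3].
  + have -> : x = y by apply: ph_pr_comparable_eq; rewrite ?(h_tr _ _ _ h2 h3) ?h1 ?orbT.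
    by rewrite /pple h2.
  + have <- : y = z by apply: ph_pr_comparable_eq; rewrite ?(r_tr _ _ _ h3 h1) ?h2 ?orbT.
    by rewrite /pple h1 orbT.
- by rewrite /pple (r_tr _ _ _ h1 h2) orbT.
Qed.

Lemma ph_eq_Npr (x y : P) : x != y -> pple x y -> ph P x y = ~~ pr P x y.
Proof.
move=> nxy; rewrite /pple.
have hxy : ~~ ((ph P x y || ph P y x) && (pr P x y || pr P y x)).
  by apply: contra nxy => /andP[hh hr]; rewrite (ph_pr_comparable_eq hh hr).
by move: hxy; case: (ph P x y); case: (pr P x y); rewrite ?orbT.
Qed.

Lemma sub_strict_below (x y : P) : pple x y ->
  [pred z | pple z x && (z != x)] \subset [pred z | pple z y && (z != y)].
Proof.
move=> hxy; apply/subsetP => z; rewrite !inE => /andP[hzx nzx].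
rewrite (pple_trans hzx hxy); apply: contra nzx => /eqP ezy.
by rewrite ezy in hzx *; rewrite (pple_anti hxy hzx).
Qed.

Lemma rank_lt (x y : P) : pple x y -> x != y -> rank x < rank y.
Proof.
move=> hxy nxy; apply: proper_card; rewrite properE sub_strict_below //=.
by apply/subsetPn; exists x; rewrite !inE ?hxy ?nxy ?eqxx ?andbF.
Qed.

Lemma pple_rank (x y : P) : pple x y = (rank x <= rank y).
Proof.
apply/idP/idP => [hxy|]; first exact/subset_leq_card/sub_strict_below.
case/orP: (pple_total x y) => // hyx; case: (eqVneq y x) => [->|nyx].
  by rewrite pple_refl.
by rewrite leqNgt rank_lt.
Qed.

Lemma rank_inj : injective (@rank P).
Proof. by move=> x y e; apply: pple_anti; rewrite pple_rank e. Qed.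

Lemma rank_lt_card (x : P) : rank x < #|P|.
Proof.
apply: proper_card; rewrite properE subset_predT.
by apply/subsetPn; exists x; rewrite ?inE ?eqxx ?andbF.
Qed.

Lemma rank_surj k : k < #|P| -> exists x : P, rank x = k.
Proof.
move=> hk; pose f (x : P) : 'I_#|P| := Ordinal (rank_lt_card x).
have f_inj : injective f by move=> x y /(congr1 val) /rank_inj.
have /codomP[x /(congr1 val) /= ->] := inj_card_onto f_inj (eq_leq (card_ord _)) (Ordinal hk).
by exists x.
Qed.

Lemma card_rank_lt k : k <= #|P| -> #|[pred z : P | rank z < k]| = k.
Proof.
elim: k => [|k IH] hk; first by apply: eq_card0 => z; rewrite inE ltn0.
have [x hx] := rank_surj hk.
rewrite (cardD1 x) inE hx ltnSn add1n -{2}(IH (ltnW hk)); congr S.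
apply: eq_card => z; rewrite !inE ltnS leq_eqVlt -hx.
by case: (eqVneq z x) => [->|nzx]; rewrite ?eqxx ?ltnn //= (inj_eq rank_inj) (negbTE nzx).
Qed.

End PlanePoset.

Lemma plane_sub (R : pp) (A : {set R}) : is_plane R -> is_plane (sub A).
Proof.
case=> [[h_refl [h_anti h_tr]] [[r_refl [r_anti r_tr]] plane]].
split; [split; [|split]|split; [split; [|split]|]] => [x|x y|x y z|x|x y|x y z|x y].
- exact: h_refl.
- by move/h_anti/val_inj.
- exact: h_tr.
- exact: r_refl.
- by move/r_anti/val_inj.
- exact: r_tr.
- exact: plane.
Qed.

Lemma plane_iota (R : pp) : is_plane R -> is_plane (iota_pp R).
Proof.
case=> [h [r plane]]; split; [exact: r|split; [exact: h|]] => x y /plane /=.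
by case: (ph R x y); case: (ph R y x); case: (pr R x y); case: (pr R y x).
Qed.

Lemma rank_iota (R : pp) (x : R) : rank (x : iota_pp R) = rank x.
Proof. by apply: eq_card => y; rewrite !inE /pple /= orbC. Qed.

Lemma card_sub (R : pp) (A : {set R}) : #|sub A| = #|A|.
Proof. by rewrite /= card_sig; apply: eq_card. Qed.

Lemma card_sub_preim (T : finType) (A : {set T}) (p : pred T) :
  #|[pred w : {x : T | x \in A} | p (val w)]| = #|[pred x | (x \in A) && p x]|.
Proof.
rewrite -(card_image val_inj); apply: eq_card => x; rewrite inE.
apply/imageP/andP => [[w hw ->]|[hA hp]]; first by split; [exact: valP|].
by exists (exist _ x hA).
Qed.

Lemma card_sum_pred (A B : finType) (p : pred (A + B)%type) :
  #|p| = #|[pred a | p (inl a)]| + #|[pred b | p (inr b)]|.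
Proof.
have inl_inj : injective (@inl A B) by move=> x y [].
have inr_inj : injective (@inr A B) by move=> x y [].
rewrite -(cardID [pred x : (A + B)%type | if x is inl _ then true else false]).
rewrite -(card_image inl_inj) -(card_image inr_inj).
congr (_ + _); apply: eq_card => [[a|b]]; rewrite !inE /=.
- by rewrite andbT (mem_image inl_inj).
- by rewrite andbF; apply/esym/imageP => -[].
- by apply/esym/imageP => -[].
- by rewrite (mem_image inr_inj).
Qed.

Definition rank_reflects_ph (P Q : pp) : Prop :=
  forall (x y : P) (x' y' : Q), rank x' = rank x -> rank y' = rank y ->
    ph Q x' y' -> ph P x y.

Lemma theta_rank (P Q : pp) (x : P) (y : Q) : theta Q x = Some y -> rank y = rank x.
Proof. by rewrite /theta; case: pickP => // z /eqP h [<-]. Qed.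

Lemma theta_rank_eq (P Q : pp) (x : P) (y : Q) : is_plane Q ->
  rank y = rank x -> theta Q x = Some y.
Proof.
move=> HQ e; rewrite /theta; case: pickP => [z /eqP hz|/(_ y)]; last by rewrite e eqxx.
by congr Some; apply: (rank_inj HQ); rewrite hz e.
Qed.

Lemma ppleqE (P Q : pp) : is_plane Q ->
  ppleq P Q <-> #|P| = #|Q| /\ rank_reflects_ph P Q.
Proof.
move=> HQ; split=> [[hc h]|[hc h]]; split=> // x y x' y'.
  by move=> ex ey; apply: h; apply: theta_rank_eq.
by move=> /theta_rank ex /theta_rank ey; apply: h.
Qed.

(* If [u' <=_h v'] in [A] but not [u <=_r v] in [B], then [u <=_h v] in [B]
   since ranks put [u] below [v]; the hypothesis then also gives
   [u' <=_r v'], contradicting planarity of [A]. *)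
Lemma rank_reflects_ph_iota (A B : pp) : is_plane A -> is_plane B ->
  rank_reflects_ph (iota_pp A) B -> rank_reflects_ph (iota_pp B) A.
Proof.
move=> HA HB hAB u v u' v'; rewrite !rank_iota => eu ev hA /=.
case: (eqVneq u v) => [<-|nuv]; first by case: HB => _ [[r_refl _] _].
have nu'v' : u' != v'.
  by apply: contra nuv => /eqP e; apply/eqP/(rank_inj HB); rewrite -eu -ev e.
have le_u'v' : pple u' v' by rewrite /pple hA.
have le_uv : @pple B u v by rewrite (pple_rank HB) -eu -ev -(pple_rank HA).
apply/negPn/negP; rewrite -(ph_eq_Npr HB nuv le_uv) => hB.
have := hAB u' v' u v; rewrite !rank_iota => /(_ (esym eu) (esym ev) hB) /= hr.
by move: hA; rewrite (ph_eq_Npr HA nu'v' le_u'v') hr.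
Qed.

Lemma ppleq_iotaC (A B : pp) : is_plane A -> is_plane B ->
  ppleq (iota_pp A) B <-> ppleq (iota_pp B) A.
Proof.
move=> HA HB; split=> [/(ppleqE _ HB) [hc h]|/(ppleqE _ HA) [hc h]].
  by apply/(ppleqE _ HA); split; [rewrite /= -hc|exact: rank_reflects_ph_iota].
by apply/(ppleqE _ HB); split; [rewrite /= -hc|exact: rank_reflects_ph_iota].
Qed.

(* What [PQ] and [P <| Q] have in common. *)
Definition ordinal_sum (P Q : pp) (hX rX : rel (P + Q)%type) : Prop :=
 [/\ forall a b, hX (inl a) (inl b) = ph P a b,
     forall a b, hX (inr a) (inr b) = ph Q a b,
     forall a b, hX (inl a) (inl b) || rX (inl a) (inl b) = pple a b,
     forall a b, hX (inr a) (inr b) || rX (inr a) (inr b) = pple a b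
   & forall a b, (hX (inl a) (inr b) || rX (inl a) (inr b)) &&
                ~~ (hX (inr b) (inl a) || rX (inr b) (inl a))].

Section OrdinalSum.
Variables (P Q : pp) (hX rX : rel (P + Q)%type).
Hypothesis sumPQ : ordinal_sum hX rX.
Local Notation X := (@PP (P + Q)%type hX rX).

Lemma rank_inl (a : P) : rank (inl a : X) = rank a.
Proof.
case: sumPQ => _ _ pple_l _ l_below_r; rewrite /rank card_sum_pred.
rewrite [X in _ + X](_ : _ = 0) ?addn0.
  by apply: eq_card => b; rewrite !inE /pple /= pple_l.
apply: eq_card0 => b; rewrite !inE /pple /=.
by have /andP[_ /negbTE ->] := l_below_r a b.
Qed.

Lemma rank_inr (b : Q) : rank (inr b : X) = #|P| + rank b.
Proof.
case: sumPQ => _ _ _ pple_r l_below_r; rewrite /rank card_sum_pred.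
congr (_ + _); apply: eq_card => c; rewrite !inE /pple /=.
  by have /andP[-> _] := l_below_r c b.
by rewrite pple_r.
Qed.

End OrdinalSum.

Definition upper_cut (R : pp) (I : {set R}) : Prop :=
  forall x y : R, x \notin I -> y \in I -> pple x y && (x != y).

Lemma biideal_upper_cut (R : pp) (I : {set R}) : is_plane R -> biideal I -> upper_cut I.
Proof.
move=> HR hI x y hx hy; apply/andP; split; last by apply: contraNneq hx => ->.
by case/orP: (pple_total HR x y) => // hyx; move: hx; rewrite (hI y x hy hyx).
Qed.

Lemma prod_split_upper_cut (R : pp) (I : {set R}) : is_prod_split I -> upper_cut I.
Proof.
by move=> hI x y hx hy; have /and5P[hr -> _ _ _] := hI x y hx hy; rewrite /pple hr orbT.
Qed.

Definition rank_cut (R : pp) (n : nat) : {set R} := [set z | n <= rank z].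

Section UpperCut.
Variables (R : pp) (I : {set R}).
Hypotheses (HR : is_plane R) (cutI : upper_cut I).

Lemma rank_sub_compl (z : sub (~: I)) : rank z = rank (val z).
Proof.
have z_out : val z \notin I by have := valP z; rewrite inE.
pose below := fun x => pple x (val z) && (x != val z).
transitivity #|[pred w : {x : R | x \in ~: I} | below (val w)]|; first exact: eq_card.
rewrite card_sub_preim; apply: eq_card => x; rewrite !inE.
case: (boolP (x \in I)) => //= hx; apply/esym/negP => /andP[hxz nxz].
have /andP[hzx _] := cutI z_out hx.
by move: nxz; rewrite (pple_anti HR hxz hzx) eqxx.
Qed.

Lemma rank_sub_cut (z : sub I) : rank (val z) = #|~: I| + rank z.
Proof.
pose below := fun x => pple x (val z) && (x != val z).
rewrite /rank -[LHS](cardID (mem (~: I))); congr (_ + _).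
  apply: eq_card => x; rewrite !inE; case: (boolP (x \in I)) => hx; rewrite ?andbF ?andbT //.
  exact/cutI/valP.
transitivity #|[pred w : {x : R | x \in I} | below (val w)]|; last exact: eq_card.
by rewrite card_sub_preim; apply: eq_card => x; rewrite !inE negbK andbC.
Qed.

Lemma upper_cut_rank : I = rank_cut R #|~: I|.
Proof.
apply/setP => z; rewrite inE; case: (boolP (z \in I)) => hz.
  by rewrite -[z]/(val (exist (fun x => x \in I) z hz)) rank_sub_cut leq_addr.
have hz' : z \in ~: I by rewrite inE.
apply/esym/negbTE; rewrite -[z]/(val (exist (fun x => x \in ~: I) z hz')).
rewrite -rank_sub_compl -ltnNge.
by rewrite -(card_sub (~: I)) rank_lt_card // plane_sub.
Qed.

End UpperCut.

Lemma rank_cut_biideal (R : pp) n : is_plane R -> biideal (rank_cut R n).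
Proof. by move=> HR x y; rewrite !inE => hx hxy; rewrite (leq_trans hx) // -pple_rank. Qed.

Lemma card_rank_cut_compl (R : pp) n : is_plane R -> n <= #|R| ->
  #|~: rank_cut R n| = n.
Proof.
by move=> HR hn; rewrite -{2}(card_rank_lt HR hn); apply: eq_card => z; rewrite !inE ltnNge.
Qed.

Section SumBelow.
Variables (P Q R : pp) (hX rX : rel (P + Q)%type).
Hypotheses (HP : is_plane P) (HQ : is_plane Q) (HR : is_plane R).
Hypothesis sumPQ : ordinal_sum hX rX.
Local Notation X := (@PP (P + Q)%type hX rX).
Local Notation I := (rank_cut R #|P|).
Hypothesis XR : ppleq X R.

Let card_R : #|R| = #|P| + #|Q|.
Proof. by case: XR => <- _; rewrite card_sum. Qed.

Let XR_rank : rank_reflects_ph X R.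
Proof. by case/(ppleqE _ HR): XR. Qed.

Let card_I_compl : #|~: I| = #|P|.
Proof. by rewrite card_rank_cut_compl // card_R leq_addr. Qed.

Let cutI : upper_cut I.
Proof. exact/(biideal_upper_cut HR)/rank_cut_biideal. Qed.

Let inl_of_lower (x : R) : x \notin I -> exists a : P, rank (inl a : X) = rank x.
Proof.
rewrite inE -ltnNge => /(rank_surj HP) [a ha].
by exists a; rewrite rank_inl.
Qed.

Let inr_of_upper (y : R) : y \in I -> exists b : Q, rank (inr b : X) = rank y.
Proof.
rewrite inE => hy; have /(rank_surj HQ) [b hb] : rank y - #|P| < #|Q|.
  by rewrite ltn_subLR // -card_R rank_lt_card.
by exists b; rewrite rank_inr // hb subnKC.
Qed.

Lemma ppleq_sum_lower : ppleq P (sub (~: I)).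
Proof.
case: (sumPQ) => ph_l _ _ _ _.
apply/(ppleqE _ (plane_sub _ HR)); split; first by rewrite card_sub card_I_compl.
move=> x y x' y' ex ey; rewrite -ph_l; apply: XR_rank.
  by rewrite rank_inl // -ex rank_sub_compl.
by rewrite rank_inl // -ey rank_sub_compl.
Qed.

Lemma ppleq_sum_upper : ppleq Q (sub I).
Proof.
case: (sumPQ) => _ ph_r _ _ _.
apply/(ppleqE _ (plane_sub _ HR)); split.
  apply/eqP; rewrite card_sub -(eqn_add2l #|~: I|) [n in _ == n]addnC cardsC.
  by rewrite card_I_compl card_R.
move=> x y x' y' ex ey; rewrite -ph_r; apply: XR_rank.
  by rewrite rank_inr // -ex rank_sub_cut // card_I_compl.
by rewrite rank_inr // -ey rank_sub_cut // card_I_compl.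
Qed.

Lemma ppleq_sum_cross (x y : R) : x \notin I -> y \in I ->
  exists a b, (ph R x y -> hX (inl a) (inr b)) /\ (ph R y x -> hX (inr b) (inl a)).
Proof.
move=> /inl_of_lower [a ha] /inr_of_upper [b hb].
by exists a, b; split; apply: XR_rank.
Qed.

End SumBelow.

Lemma ppleq_sum_of_cut (P Q R : pp) (hX rX : rel (P + Q)%type) (I : {set R}) :
  is_plane R -> ordinal_sum hX rX -> upper_cut I ->
  ppleq P (sub (~: I)) -> ppleq Q (sub I) ->
  (forall a b (x y : R), x \notin I -> y \in I ->
     (ph R x y -> hX (inl a) (inr b)) /\ (ph R y x -> hX (inr b) (inl a))) ->
  ppleq (@PP (P + Q)%type hX rX) R.
Proof.
move=> HR sumPQ cutI /(ppleqE _ (plane_sub _ HR)) [cP rP].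
move=> /(ppleqE _ (plane_sub _ HR)) [cQ rQ] cross.
rewrite card_sub in cP; rewrite card_sub in cQ; have [ph_l ph_r _ _ _] := sumPQ.
have I_rank := upper_cut_rank HR cutI; rewrite -cP in I_rank.
have inl_out a (x : R) : rank x = rank (inl a : @PP _ hX rX) -> x \notin I.
  by rewrite rank_inl // I_rank inE -ltnNge => ->; apply: rank_lt_card.
have inr_in b (y : R) : rank y = rank (inr b : @PP _ hX rX) -> y \in I.
  by rewrite rank_inr // I_rank inE => ->; rewrite leq_addr.
apply/(ppleqE _ HR); split; first by rewrite card_sum cP cQ addnC cardsC.
case=> [a|b] [c|d] x y ex ey hxy.
- have hx : x \in ~: I by rewrite inE (inl_out a).
  have hy : y \in ~: I by rewrite inE (inl_out c).
  rewrite /= ph_l; apply: (rP a c (exist _ x hx) (exist _ y hy)) => //.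
    by rewrite rank_sub_compl // ex rank_inl.
  by rewrite rank_sub_compl // ey rank_inl.
- exact: (cross a d x y (inl_out _ _ ex) (inr_in _ _ ey)).1.
- exact: (cross c b y x (inl_out _ _ ey) (inr_in _ _ ex)).2.
- have hx := inr_in _ _ ex; have hy := inr_in _ _ ey.
  rewrite /= ph_r; apply: (rQ b d (exist _ x hx) (exist _ y hy)) => //.
    by apply/eqP; rewrite -(eqn_add2l #|~: I|) -rank_sub_cut //= ex rank_inr // cP.
  by apply/eqP; rewrite -(eqn_add2l #|~: I|) -rank_sub_cut //= ey rank_inr // cP.
Qed.

Lemma prod_split_of_cut (R : pp) (I : {set R}) : is_plane R -> upper_cut I ->
  (forall x y, x \notin I -> y \in I -> ~~ ph R x y && ~~ ph R y x) -> is_prod_split I.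
Proof.
move=> HR cutI no_ph x y hx hy.
have /andP[nxy nyx] := no_ph x y hx hy; have /andP[le_xy neq_xy] := cutI x y hx hy.
have hxy : pr R x y by move: le_xy; rewrite /pple (negbTE nxy).
have Nyx : ~~ pr R y x.
  by apply: contra neq_xy => hyx; rewrite (pple_anti HR le_xy) // /pple hyx orbT.
by rewrite hxy neq_xy Nyx nxy nyx.
Qed.

Lemma sum_cut_eq_theta_img (P Q R : pp) (hX rX : rel (P + Q)%type) (I : {set R}) :
  is_plane Q -> is_plane R -> ordinal_sum hX rX -> #|{: P + Q}| = #|R| ->
  upper_cut I -> #|P| = #|sub (~: I)| ->
  I = [set y : R | [exists q : Q, @theta (@PP (P + Q)%type hX rX) R (inr q) == Some y]].
Proof.
move=> HQ HR sumPQ cardR cutI; rewrite card_sub => cardI.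
rewrite {1}(upper_cut_rank HR cutI) -cardI; apply/setP => y; rewrite !inE.
apply/idP/existsP => [hy|[b /eqP /theta_rank ->]]; last by rewrite rank_inr ?leq_addr.
have /(rank_surj HQ) [b hb] : rank y - #|P| < #|Q|.
  by rewrite ltn_subLR // -card_sum cardR rank_lt_card.
by exists b; apply/eqP/theta_rank_eq; rewrite // rank_inr // hb subnKC.
Qed.

Section PlaneOperations.
Variables (P Q R : pp).
Hypotheses (HP : is_plane P) (HQ : is_plane Q) (HR : is_plane R).

Lemma ppleq_ptri : ppleq (ptri P Q) R <->
  exists I : {set R}, [/\ biideal I, ppleq P (sub (~: I)) & ppleq Q (sub I)].
Proof.
have sumPQ : ordinal_sum (ph (ptri P Q)) (pr (ptri P Q)) by [].
split=> [XR|[I [hI hP hQ]]].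
  exists (rank_cut R #|P|); split; first exact: rank_cut_biideal.
    exact: ppleq_sum_lower sumPQ XR.
  exact: ppleq_sum_upper sumPQ XR.
apply: (ppleq_sum_of_cut HR sumPQ (biideal_upper_cut HR hI) hP hQ) => a b x y hx hy.
by split=> // hyx; move: hx; rewrite (hI y x hy) ?hyx.
Qed.

Lemma ppleq_pprod : ppleq (pprod P Q) R <->
  exists I : {set R}, [/\ is_prod_split I, ppleq P (sub (~: I)) & ppleq Q (sub I)].
Proof.
have sumPQ : ordinal_sum (ph (pprod P Q)) (pr (pprod P Q)) by [].
split=> [XR|[I [hI hP hQ]]].
  exists (rank_cut R #|P|); split.
  - apply: prod_split_of_cut => // [|x y hx hy].
      exact/(biideal_upper_cut HR)/rank_cut_biideal.
    have [a [b [hxy hyx]]] := ppleq_sum_cross HP HQ HR sumPQ XR hx hy.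
    by rewrite (contraNN hxy) ?(contraNN hyx).
  - exact: ppleq_sum_lower sumPQ XR.
  - exact: ppleq_sum_upper sumPQ XR.
apply: (ppleq_sum_of_cut HR sumPQ (prod_split_upper_cut hI) hP hQ) => a b x y hx hy.
by have /and5P[_ _ _ /negbTE -> /negbTE ->] := hI x y hx hy.
Qed.

End PlaneOperations.

Lemma ppleq_iota_pprod (P Q R : pp) :
  is_plane P -> is_plane Q -> is_plane R -> ppleq (iota_pp (pprod P Q)) R <->
  exists I : {set R}, [/\ biideal I, ppleq (iota_pp (sub (~: I))) P
                                 & ppleq (iota_pp (sub I)) Q].
Proof.
move=> HP HQ HR; have [HiP HiQ] := (plane_iota HP, plane_iota HQ).
(* [iota (PQ)] and [iota P <| iota Q] are convertible. *)
have iota_ptri := ppleq_ptri (iota_pp P) (iota_pp Q) HR.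
split=> [/iota_ptri|] [I [hI hP hQ]]; last apply/iota_ptri;
  by exists I; split=> //; apply/ppleq_iotaC => //; apply: plane_sub.
Qed.

Lemma ppleq_iota_ptri (P Q R : pp) :
  is_plane P -> is_plane Q -> is_plane R -> ppleq (iota_pp (ptri P Q)) R <->
  exists I : {set R}, [/\ is_prod_split I, ppleq (iota_pp (sub (~: I))) P
                                      & ppleq (iota_pp (sub I)) Q].
Proof.
move=> HP HQ HR; have [HiP HiQ] := (plane_iota HP, plane_iota HQ).
have iota_pprod := ppleq_pprod HiP HiQ HR.
split=> [/iota_pprod|] [I [hI hP hQ]]; last apply/iota_pprod;
  by exists I; split=> //; apply/ppleq_iotaC => //; apply: plane_sub.
Qed.

Theorem lemma22 (P Q R : pp) :
  is_plane P -> is_plane Q -> is_plane R ->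
  (* (1) *)
  ((ppleq (ptri P Q) R <->
     exists I : {set R}, [/\ biideal I, ppleq P (sub (~: I)) & ppleq Q (sub I)])
   /\ (ppleq (ptri P Q) R -> forall I : {set R},
        [/\ biideal I, ppleq P (sub (~: I)) & ppleq Q (sub I)] ->
        I = theta_img_prod P Q R))
  /\
  (* (2) *)
  ((ppleq (pprod P Q) R <->
     exists I : {set R}, [/\ is_prod_split I, ppleq P (sub (~: I)) & ppleq Q (sub I)])
   /\ (ppleq (pprod P Q) R -> forall I : {set R},
        [/\ is_prod_split I, ppleq P (sub (~: I)) & ppleq Q (sub I)] ->
        I = theta_img_tri P Q R))
  /\
  (* (3) *)
  ((ppleq (iota_pp (pprod P Q)) R <->
     exists I : {set R}, [/\ biideal I, ppleq (iota_pp (sub (~: I))) P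
                                    & ppleq (iota_pp (sub I)) Q])
   /\ (ppleq (iota_pp (pprod P Q)) R -> forall I : {set R},
        [/\ biideal I, ppleq (iota_pp (sub (~: I))) P & ppleq (iota_pp (sub I)) Q] ->
        I = theta_img_prod P Q R))
  /\
  (* (4) *)
  ((ppleq (iota_pp (ptri P Q)) R <->
     exists I : {set R}, [/\ is_prod_split I, ppleq (iota_pp (sub (~: I))) P
                                         & ppleq (iota_pp (sub I)) Q])
   /\ (ppleq (iota_pp (ptri P Q)) R -> forall I : {set R},
        [/\ is_prod_split I, ppleq (iota_pp (sub (~: I))) P & ppleq (iota_pp (sub I)) Q] ->
        I = theta_img_tri P Q R)).
Proof.
move=> HP HQ HR.
have sumP : ordinal_sum (ph (pprod P Q)) (pr (pprod P Q)) by [].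
have sumT : ordinal_sum (ph (ptri P Q)) (pr (ptri P Q)) by [].
split; [|split; [|split]]; split.
- exact: ppleq_ptri.
- move=> [cR _] I [/(biideal_upper_cut HR) cutI [cI _] _].
  exact: (sum_cut_eq_theta_img HQ HR sumP).
- exact: ppleq_pprod.
- move=> [cR _] I [/prod_split_upper_cut cutI [cI _] _].
  exact: (sum_cut_eq_theta_img HQ HR sumT).
- exact: ppleq_iota_pprod.
- move=> [cR _] I [/(biideal_upper_cut HR) cutI [cI _] _].
  exact: (sum_cut_eq_theta_img HQ HR sumP).
- exact: ppleq_iota_ptri.
- move=> [cR _] I [/prod_split_upper_cut cutI [cI _] _].
  exact: (sum_cut_eq_theta_img HQ HR sumT).
Qed.
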